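(* Fix a constant $f\in\mathbb{N}$ and let $\ell=f+1$. Consider directed graphs $G=(V,E)$ with $n=|V|\to\infty$, each with a partition $R_1,\dots,R_k$ of $V$, and let $R=\max_{k'\in[k]}|R_{k'}|$ and $r=\min_{k'\in[k]}|R_{k'}|$. Consider the partitioned omission reinforcement (described in the context) under the fault model $\mathrm{Om}(p)$, $p=p(n)$. (i) If $p\in o\big((n/r)^{-1/(f+1)}/R\big)$, the construction is a valid reinforcement for $\mathrm{Om}(p)$, i.e., with probability $1-o(1)$, $A'$ simulates $A$. (ii) If $G$ contains $\Omega(n)$ nodes with non-zero out-degree, $R\in O(1)$, and $p\in\omega(n^{-1/(f+1)})$, the reinforcement is not valid: there exist a scheduling algorithm $A$, inputs and omission behavior such that with probability $1-o(1)$, $A'$ does not simulate $A$.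
   Context: Model: a synchronous network is a directed graph $G=(V,E)$ with $n=|V|$. A scheduling algorithm $A$ assigns a state to each node; in each round each node may receive environment input, decides from its state which message (if any) to send on each outgoing link, and updates its state from messages received on incoming links. Write $[\ell]=\{1,\dots,\ell\}$. Fault model $\mathrm{Om}(p)$: the set $F'$ of faulty nodes of $G'$ is obtained by including each node independently with probability $p$; faulty nodes may only omit sending messages they should send. Partitioned omission reinforcement: $V'=V\times[\ell]$, $v_i=(v,i)$, $P(v_i)=v$. For $e=(v,w)\in E$, $E'_e=\{(v_i,w_i): i\in[\ell]\}$ if $v,w$ are in the same region, and $E'_e=\{(v_i,w_j): i,j\in[\ell]\}$ otherwise; $E'=\bigcup_e E'_e$. Each copy receives the environment input of its original. Algorithm $A'$: each $v'$ initializes local copies of the state of $P(v')$ and sets $\mathit{know}_{v'}=\mathbf{true}$; in each round, on each $(v',w')\in E'$, if $\mathit{know}_{v'}=\mathbf{true}$ it sends the message $P(v')$ would send on $(P(v'),P(w'))$ under $A$, or a symbol $\bot$ if there is none, and sends nothing if $\mathit{know}_{v'}=\mathbf{false}$; if $\mathit{know}_{v'}=\mathbf{true}$ and for every in-neighbor $w$ of $P(v')$ it received a message from some copy of $w$, it updates its state accordingly ($\bot$ meaning no message), and otherwise sets $\mathit{know}_{v'}=\mathbf{false}$. Simulation under $\mathrm{Om}(p)$: for each $v\in V$, some copy $v'$ with $P(v')=v$ computes in each round the state of $v$ under $A$. A reinforcement is valid if $A'$ simulates $A$ with probability $1-o(1)$ as $n\to\infty$. *)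

From HB Require Import structures.
From mathcomp Require Import all_boot all_order all_algebra.
From mathcomp Require Import all_classical all_reals all_analysis.
Set Implicit Arguments. Unset Strict Implicit. Unset Printing Implicit Defensive.
Import Order.TTheory GRing.Theory Num.Theory.
Local Open Scope ring_scope.

(* A synchronous deterministic scheduling algorithm on a graph with node set V,
   node states S, environment inputs I and messages M.
   In round t, node v with state s and input x sends [send v w s x] on link (v,w)
   ([None] = no message), and updates its state to [upd v s x rcv], where
   [rcv u] is the message received from u on link (u,v) ([None] = nothing). *)
Record algorithm (V : finType) (S I M : Type) := Algorithm {
  alg_init : V -> S;
  alg_send : V -> V -> S -> I -> option M;
  alg_upd  : V -> S -> I -> (V -> option M) -> S }.

Section Semantics.
Variables (V : finType) (E : rel V) (P : {set {set V}}).
Variables (S I M : Type) (A : algorithm V S I M) (inp : nat -> V -> I).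

Fixpoint run (t : nat) : V -> S :=
  match t with
  | 0 => alg_init A
  | t'.+1 => fun v =>
      alg_upd A v (run t' v) (inp t' v)
        (fun u => if E u v then alg_send A u v (run t' u) (inp t' u) else None)
  end.

Definition same_region (v w : V) : bool := finset.pblock P v == finset.pblock P w.

Variable l : nat.
(* V' = V x [l]; the copy (v,i) is v_i, and P(v_i) = v is the first component *)
Definition V' := (V * 'I_l)%type.

Definition E' : rel V' := fun x y =>
  E x.1 y.1 && (if same_region x.1 y.1 then x.2 == y.2 else true).

(* Execution of A' on G' under an omission behaviour [om]:
   [om t x y = true] means that x omits the message it should send on (x,y)
   in round t. States of A' are pairs (local copy of the state, know).
   Messages of A' are [option M]: [None] is the symbol bottom. *)
Variable om : nat -> V' -> V' -> bool.

Definition delivered (t : nat) (st : V' -> S * bool) (x y : V')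
  : option (option M) :=
  if E' x y && ~~ om t x y && (st x).2
  then Some (alg_send A x.1 y.1 (st x).1 (inp t x.1))
  else None.

Definition step' (t : nat) (st : V' -> S * bool) (y : V') : S * bool :=
  if (st y).2 &&
     [forall u : V, E u y.1 ==> [exists i : 'I_l, isSome (delivered t st (u, i) y)]]
  then
    (alg_upd A y.1 (st y).1 (inp t y.1)
       (fun u => if E u y.1 then
          match [pick i : 'I_l | isSome (delivered t st (u, i) y)] with
          | Some i => match delivered t st (u, i) y with
                      | Some (Some m) => Some m
                      | _ => None
                      end
          | None => None
          end
        else None), true)
  else ((st y).1, false).

Fixpoint run' (t : nat) : V' -> S * bool :=
  match t with
  | 0 => fun y => (alg_init A y.1, true)
  | t'.+1 => step' t' (run' t')
  end.

Definition simulates : Prop :=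
  forall v : V, exists i : 'I_l, forall t : nat,
      run' t (v, i) = (run t v, true).

End Semantics.

Definition admissible (W : finType) (F : {set W}) (om : nat -> W -> W -> bool) :=
  forall t x y, om t x y -> x \in F.

(* Probability, under Om(p), that the random fault set F' (each node of W
   included independently with probability p) satisfies [ev]. *)
Definition prob_Om (R : realType) (W : finType) (p : R) (ev : {set W} -> Prop) : R :=
  \sum_(F : {set W} | `[< ev F >]) p ^+ #|F| * (1 - p) ^+ (#|W| - #|F|).

Definition max_region (V : finType) (P : {set {set V}}) : nat := \max_(B in P) #|B|.
Definition min_region (V : finType) (P : {set {set V}}) : nat :=
  \big[minn/#|V|]_(B in P) #|B|.

From HB Require Import structures.
From mathcomp Require Import all_boot all_order all_algebra.
From mathcomp Require Import all_classical all_reals all_analysis.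
From mathcomp Require Import ring lra.
Import Order.TTheory GRing.Theory Num.Theory.
Import numFieldNormedType.Exports.

Set Implicit Arguments. Unset Strict Implicit. Unset Printing Implicit Defensive.
Local Open Scope ring_scope.

(* If every region B has an index i such that no copy w_i, w in B,
   is faulty, the copies chosen this way are joined along every edge of G and
   never omit, so they keep simulating A under any omission behaviour.  If
   not, some region B and some map g : [f+1] -> B have all copies (g i)_i
   faulty; the union bound over all such (B, g) gives the failure bound
   sum_B (|B| p)^(f+1) <= (n/r) (R p)^(f+1), the (f+1)-st power of the ratio
   assumed to vanish.

   If all copies of a node u with an out-neighbour w are faulty
   and omit everything, no copy of w completes the first round, whatever the
   algorithm.  The expected number of such nodes is at least c n p^(f+1),
   which diverges, so the second moment bound shows this happens with
   probability tending to 1. *)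
Section FaultModel.
Variables (R : realType) (W : finType) (p : R).

Definition weight (F : {set W}) : R := p ^+ #|F| * (1 - p) ^+ (#|W| - #|F|).

Definition expect (g : {set W} -> R) : R := \sum_F weight F * g F.

Lemma prob_OmE (ev : {set W} -> Prop) :
  prob_Om p ev = expect (fun F => (`[< ev F >] : bool)%:R).
Proof.
rewrite /prob_Om /expect big_mkcond; apply: eq_bigr => F _.
by case: ifP; rewrite ?mulr1 ?mulr0.
Qed.

Lemma expectB (g h : {set W} -> R) :
  expect (fun F => g F - h F) = expect g - expect h.
Proof. by rewrite /expect -sumrB; apply: eq_bigr => F _; rewrite mulrBr. Qed.

Lemma expectZ (c : R) (g : {set W} -> R) :
  expect (fun F => c * g F) = c * expect g.
Proof. by rewrite /expect big_distrr; apply: eq_bigr => F _; rewrite mulrCA. Qed.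

Lemma expect_sum (J : finType) (A : pred J) (g : J -> {set W} -> R) :
  expect (fun F => \sum_(j in A) g j F) = \sum_(j in A) expect (g j).
Proof.
rewrite /expect -exchange_big; apply: eq_bigr => F _.
by rewrite big_distrr.
Qed.

Lemma weight_prod (F : {set W}) :
  weight F = \prod_x (if x \in F then p else 1 - p).
Proof.
rewrite (bigID (mem F)) /= (eq_bigr (fun=> p)); last by move=> x ->.
rewrite [X in _ * X](eq_bigr (fun=> 1 - p)); last by move=> x /negbTE ->.
by rewrite !prodr_const /weight -[in #|W|](cardC (mem F)) addKn.
Qed.

Lemma sum_subsets (h : W -> bool -> R) :
  \sum_(F : {set W}) \prod_x h x (x \in F) = \prod_x (h x true + h x false).
Proof.
under [RHS]eq_bigr do rewrite -big_bool.
rewrite bigA_distr_bigA (reindex (fun F : {set W} => [ffun x => x \in F])) /=.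
  by apply: eq_bigr => F _; apply: eq_bigr => x _; rewrite ffunE.
exists (fun g : {ffun W -> bool} => [set x | g x]) => [F _|g _].
  by apply/setP => x; rewrite inE ffunE.
by apply/ffunP => x; rewrite ffunE inE.
Qed.

Lemma expect_superset (X : {set W}) :
  expect (fun F => (X \subset F)%:R) = p ^+ #|X|.
Proof.
pose h x (b : bool) := (if x \in X then b%:R else 1) * (if b then p else 1 - p).
transitivity (\sum_(F : {set W}) \prod_x h x (x \in F)).
  apply: eq_bigr => F _; rewrite weight_prod big_split /= mulrC; congr (_ * _).
  case: (boolP (X \subset F)) => [/fintype.subsetP sXF | /fintype.subsetPn [x xX xF]].
    by rewrite big1 // => x _; case: ifPn => // /sXF ->.
  by rewrite (bigD1 x) //= xX (negbTE xF) mul0r.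
rewrite sum_subsets (bigID (mem X)) /= [X in _ * X]big1 ?mulr1; last first.
  by move=> x /negbTE xX; rewrite /h xX !mul1r addrC subrK.
by rewrite -prodr_const; apply: eq_bigr => x xX; rewrite /h xX mul1r mul0r addr0.
Qed.

(* The weights sum to 1 (the case X = empty set). *)
Lemma expect_cst (c : R) : expect (fun=> c) = c.
Proof.
have := expect_superset finset.set0; rewrite cards0 expr0 => E1.
rewrite -[RHS]mulr1 -E1 -expectZ; apply: eq_bigr => F _.
by rewrite finset.sub0set mulr1.
Qed.

Hypothesis p01 : 0 <= p <= 1.

Lemma expect_le (g h : {set W} -> R) :
  (forall F, g F <= h F) -> expect g <= expect h.
Proof.
move=> gh; apply: ler_sum => F _; apply: ler_wpM2l (gh F).
by case/andP: p01 => p0 p1; rewrite mulr_ge0 ?exprn_ge0 ?subr_ge0.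
Qed.

Lemma prob_mono (ev1 ev2 : {set W} -> Prop) :
  (forall F, ev1 F -> ev2 F) -> prob_Om p ev1 <= prob_Om p ev2.
Proof.
move=> ev12; rewrite !prob_OmE; apply: expect_le => F.
by case: asboolP => [/ev12|_]; case: asboolP.
Qed.

Lemma prob_le1 (ev : {set W} -> Prop) : prob_Om p ev <= 1.
Proof.
rewrite prob_OmE -[X in _ <= X](expect_cst 1); apply: expect_le => F.
by case: asboolP.
Qed.

Lemma prob_compl (ev : {set W} -> Prop) :
  prob_Om p ev = 1 - prob_Om p (fun F => ~ ev F).
Proof.
rewrite !prob_OmE -[X in X - _](expect_cst 1) -expectB.
by apply: eq_bigr => F _; case: asboolP; case: asboolP; rewrite ?subr0 ?subrr.
Qed.

End FaultModel.

Section Moments.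
Variables (R : realType) (W : finType) (p : R).
Variables (J : finType) (A : pred J) (X : J -> {set W}).
Hypothesis p01 : 0 <= p <= 1.

Definition hits (F : {set W}) : R := \sum_(j in A) (X j \subset F)%:R.

Definition mean_hits : R := \sum_(j in A) p ^+ #|X j|.

Lemma hits_ge0 (F : {set W}) : 0 <= hits F.
Proof. by apply: sumr_ge0 => j _; exact: ler0n. Qed.

Lemma expect_hits : expect p hits = mean_hits.
Proof. by rewrite expect_sum; apply: eq_bigr => j _; rewrite expect_superset. Qed.

Lemma union_bound :
  prob_Om p (fun F => exists2 j, A j & X j \subset F) <= mean_hits.
Proof.
rewrite prob_OmE -expect_hits; apply: expect_le => // F.
case: asboolP => [[j Aj sXF]|_]; last exact: hits_ge0.
by rewrite /hits (bigD1 j) //= sXF lerDl sumr_ge0 // => i _; exact: ler0n.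
Qed.

Hypothesis disjX : forall i j, A i -> A j -> i != j -> [disjoint X i & X j].

(* For disjoint sets the events "X i faulty" are independent, so the second
   moment of [hits] exceeds its squared mean by at most the mean. *)
Lemma expect_hits_sq : expect p (fun F => hits F ^+ 2) <= mean_hits + mean_hits ^+ 2.
Proof.
have hits_sq F : hits F ^+ 2 =
    \sum_(i in A) \sum_(j in A) (X i :|: X j \subset F)%:R.
  rewrite expr2 /hits mulr_suml; apply: eq_bigr => i _.
  by rewrite mulr_sumr; apply: eq_bigr => j _; rewrite finset.subUset -natrM mulnb.
have -> : mean_hits + mean_hits ^+ 2 = \sum_(i in A) \sum_(j in A)
    ((i == j)%:R * p ^+ #|X i| + p ^+ #|X i| * p ^+ #|X j|).
  rewrite expr2 mulr_suml -big_split; apply: eq_bigr => i Ai.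
  rewrite big_split -mulr_sumr /=; congr (_ + _).
  rewrite (bigD1 i) //= eqxx mul1r big1 ?addr0 // => j /andP [_ ji].
  by rewrite eq_sym (negbTE ji) mul0r.
rewrite (boolp.funext hits_sq) expect_sum; apply: ler_sum => i Ai.
rewrite expect_sum; apply: ler_sum => j Aj; rewrite expect_superset.
have [<-|ij] := eqVneq i j.
  by rewrite finset.setUid mul1r lerDl -expr2 exprn_ge0 // exprn_ge0 //; case/andP: p01.
have /eqP -> : #|X i :|: X j| == (#|X i| + #|X j|)%N.
  by rewrite (leq_card_setU _ _).2 disjX.
by rewrite exprD mul0r add0r.
Qed.

Lemma second_moment : 0 < mean_hits ->
  1 - mean_hits^-1 <= prob_Om p (fun F => exists2 j, A j & X j \subset F).
Proof.
set mu := mean_hits => mu_gt0.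
have pointwise F : 1 - mu^-2 * (hits F - mu) ^+ 2 <=
    (`[< exists2 j, A j & X j \subset F >] : bool)%:R.
  case: asboolP => [_|none].
    by rewrite lerBlDr lerDl mulr_ge0 ?sqr_ge0 // invr_ge0 exprn_ge0 // ltW.
  have -> : hits F = 0.
    rewrite /hits big1 // => j Aj; case: (boolP (X j \subset F)) => // sXF.
    by case: none; exists j.
  by rewrite sub0r sqrrN mulVf ?subrr // expf_neq0 // gt_eqF.
have variance : expect p (fun F => (hits F - mu) ^+ 2) <= mu.
  have -> : (fun F => (hits F - mu) ^+ 2) =
      (fun F => hits F ^+ 2 - (2 * mu * hits F - mu ^+ 2)).
    by apply: boolp.funext => F; ring.
  rewrite !expectB expectZ !expect_cst expect_hits -/mu.
  by have := expect_hits_sq; rewrite -/mu; nra.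
rewrite prob_OmE; apply: le_trans (expect_le p01 pointwise).
rewrite expectB expectZ expect_cst lerB //.
apply: le_trans (ler_wpM2l _ variance) _; first by rewrite invr_ge0 exprn_ge0 ?ltW.
by rewrite expr2 invfM -mulrA mulVf ?mulr1 // gt_eqF.
Qed.

End Moments.

Section Executions.
Variables (V : finType) (E : rel V) (P : {set {set V}}).
Variables (S I M : Type) (A : algorithm V S I M) (inp : nat -> V -> I).
Variables (l : nat) (om : nat -> V' V l -> V' V l -> bool).

Local Notation state := (run' E P A inp om).

(* Whatever the omissions, a copy that still knows holds the correct state:
   every message it accepted was sent by a knowing copy, hence is correct. *)
Lemma knowing_copy_correct t (y : V' V l) :
  (state t y).2 -> (state t y).1 = run E A inp t y.1.
Proof.
elim: t y => [//|t IH] y /=; rewrite /step'.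
case: ifP => [/andP [ky /forallP all_heard] _ /=|//].
rewrite IH //; congr (alg_upd _ _ _ _ _); apply: boolp.funext => u.
case Eu: (E u y.1) => //.
case: pickP => [i|none]; last first.
  by have /existsP [i heard] := implyP (all_heard u) Eu; rewrite none in heard.
rewrite /delivered; case: ifP => // /andP [_ ku] _.
by rewrite IH //; case: alg_send.
Qed.

Variable F : {set V' V l}.
Hypothesis adm : admissible F om.

Variable g : V -> 'I_l.
Hypothesis g_region : forall v w, same_region P v w -> g v = g w.
Hypothesis g_clean : forall v, (v, g v) \notin F.

Lemma chosen_delivered t u v : E u v -> (state t (u, g u)).2 ->
  isSome (delivered E P A inp om t (state t) (u, g u) (v, g v)).
Proof.
move=> Euv ku; rewrite /delivered /E' /= Euv ku andbT /=.
have -> : om t (u, g u) (v, g v) = false.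
  by apply/negP => /adm; apply/negP; exact: g_clean.
by case sr: (same_region P u v); rewrite // (g_region sr) eqxx.
Qed.

Lemma chosen_copy_knows t v : (state t (v, g v)).2.
Proof.
elim: t v => [//|t IH] v /=; rewrite /step' IH /=.
case: ifP => //= /negP []; apply/forallP => u; apply/implyP => Euv.
by apply/existsP; exists (g u); exact: chosen_delivered.
Qed.

Lemma chosen_copies_simulate : simulates E P A inp om.
Proof.
move=> v; exists (g v) => t.
have kv := chosen_copy_knows t v.
by rewrite [LHS]surjective_pairing knowing_copy_correct // kv.
Qed.

End Executions.

Definition omit_all (W : finType) (F : {set W}) : nat -> W -> W -> bool :=
  fun _ x _ => x \in F.

Lemma omit_all_admissible (W : finType) (F : {set W}) : admissible F (omit_all F).
Proof. by []. Qed.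

(* If all copies of an in-neighbour u of w are faulty and silent, no copy of w
   hears from u in the first round, so simulation fails (for any algorithm). *)
Lemma faulty_inneighbour_blocks (V : finType) (E : rel V) (P : {set {set V}})
    (S I M : Type) (A : algorithm V S I M) (inp : nat -> V -> I)
    (l : nat) (F : {set V' V l}) (u w : V) :
  E u w -> (forall i, (u, i) \in F) -> ~ simulates E P A inp (omit_all F).
Proof.
move=> Euw faulty_u simul; have [i /(_ 1%N)] := simul w.
rewrite /= /step' /=; case: ifP => // /forallP /(_ u); rewrite Euw /=.
by case/existsP => j; rewrite /delivered /omit_all faulty_u andbF.
Qed.

Section Regions.
Variables (V : finType) (P : {set {set V}}).
Hypothesis HP : finset.partition P [set: V].

Lemma region_covers (v : V) : v \in finset.cover P.
Proof. by case/and3P: HP => /eqP -> _ _; rewrite inE. Qed.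

Lemma min_region_le (B : {set V}) : B \in P -> (min_region P <= #|B|)%N.
Proof.
move=> BP; rewrite /min_region -big_filter; set s := seq.filter _ _.
have : B \in s by rewrite mem_filter BP mem_index_enum.
elim: s => // C r IH; rewrite inE big_cons.
by case/predU1P => [<-|/IH]; [exact: geq_minl | rewrite geq_min => ->; rewrite orbT].
Qed.

Lemma max_region_ge (B : {set V}) : B \in P -> (#|B| <= max_region P)%N.
Proof. by move=> BP; rewrite /max_region (bigD1 B) //= leq_maxl. Qed.

Lemma min_region_gt0 : (0 < #|V|)%N -> (0 < min_region P)%N.
Proof.
move=> V_gt0; apply: (big_ind (fun k => 0 < k)%N) => // [k k' k0 k'0|B BP].
  by rewrite leq_min k0 k'0.
rewrite card_gt0; apply/negP => /eqP B0.
by case/and3P: HP => _ _; rewrite -B0 BP.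
Qed.

Lemma card_partition_min : (#|P| * min_region P <= #|V|)%N.
Proof.
rewrite -cardsT (card_partition HP) -sum1_card big_distrl /=.
by apply: leq_sum => B BP; rewrite mul1n min_region_le.
Qed.

End Regions.

Lemma powR_root_inv (R : realType) (x : R) (l : nat) : (0 < l)%N -> 0 < x ->
  (x `^ (- (l%:R)^-1)) ^+ l = x^-1.
Proof.
move=> l_gt0 x_gt0; rewrite -powR_mulrn ?powR_ge0 // -powRrM mulNr.
by rewrite mulVf ?pnatr_eq0 -?lt0n // powR_inv1 // ltW.
Qed.

(* The quantity p / ((n/r)^(-1/(f+1)) / R) that must vanish in part (i). *)
Definition valid_ratio (R : realType) (V : finType) (P : {set {set V}})
    (f : nat) (p : R) : R :=
  p / (((#|V|%:R / (min_region P)%:R) `^ (- (f.+1%:R)^-1)) / (max_region P)%:R).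

(* There are at most n/r regions, each of size at most R, hence
   sum_B (|B| p)^(f+1) <= (n/r) (R p)^(f+1) = valid_ratio ^ (f+1). *)
Lemma sum_regions_bound (R : realType) (V : finType) (P : {set {set V}})
    (f : nat) (p : R) :
  finset.partition P [set: V] -> 0 <= p -> (0 < #|V|)%N ->
  \sum_(B in P) (#|B|%:R * p) ^+ f.+1 <= valid_ratio P f p ^+ f.+1.
Proof.
move=> HP p_ge0 V_gt0; have r_gt0 := min_region_gt0 HP V_gt0.
have nr_gt0 : 0 < #|V|%:R / (min_region P)%:R :> R by rewrite divr_gt0 ?ltr0n.
rewrite /valid_ratio invf_div mulrA exprMn exprVn powR_root_inv // invrK.
apply: (@le_trans _ _ (\sum_(B in P) ((max_region P)%:R * p) ^+ f.+1)).
  apply: ler_sum => B BP; apply: lerXn2r; rewrite ?nnegrE ?mulr_ge0 //.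
  by apply: ler_wpM2r => //; rewrite ler_nat max_region_ge.
rewrite sumr_const -[_ *+ #|P|]mulr_natr [p * _]mulrC; apply: ler_wpM2l.
  by rewrite exprn_ge0 // mulr_ge0.
by rewrite ler_pdivlMr ?ltr0n // -natrM ler_nat card_partition_min.
Qed.

Definition copy_choice (V : finType) (l : nat) (g : {ffun 'I_l -> V}) : {set V' V l} :=
  [set (g i, i) | i : 'I_l].

Lemma card_copy_choice (V : finType) (l : nat) (g : {ffun 'I_l -> V}) :
  #|copy_choice g| = l.
Proof. by rewrite card_imset ?card_ord // => i j [_ ->]. Qed.

Definition copies (V : finType) (l : nat) (v : V) : {set V' V l} :=
  [set (v, i) | i : 'I_l].

Lemma card_copies (V : finType) (l : nat) (v : V) : #|copies l v| = l.
Proof. by rewrite card_imset ?card_ord // => i j [->]. Qed.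

Lemma copies_disjoint (V : finType) (l : nat) (u v : V) :
  u != v -> [disjoint copies l u & copies l v].
Proof.
move=> uv; rewrite -setI_eq0; apply/eqP/setP => x; rewrite !inE.
apply/negP => /andP [/imsetP [i _ ->] /imsetP [j _ [uv_eq _]]].
by rewrite uv_eq eqxx in uv.
Qed.

Section ValidCase.
Variables (V : finType) (P : {set {set V}}) (f : nat).

Definition good_regions (F : {set V' V f.+1}) : bool :=
  [forall B in P, [exists i, [forall w in B, (w, i) \notin F]]].

Lemma good_regions_simulate (E : rel V) (S I M : Type) (A : algorithm V S I M)
    (inp : nat -> V -> I) (F : {set V' V f.+1}) om :
  finset.partition P [set: V] -> good_regions F -> admissible F om ->
  simulates E P A inp om.
Proof.
move=> HP /forall_inP good adm.
pose g v := odflt ord0 [pick i | [forall w in finset.pblock P v, (w, i) \notin F]].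
apply: (chosen_copies_simulate E A inp adm (g := g)) => [u v /eqP same|v].
  by rewrite /g same.
rewrite /g; case: pickP => [i /forall_inP clean|none].
  by apply: clean; rewrite mem_pblock region_covers.
have /existsP [i clean] := good _ (pblock_mem (region_covers HP v)).
by rewrite none in clean.
Qed.

(* Off the good event some region B has a faulty copy of every index; choosing
   one per index gives a map g : [l] -> B whose copy choice is all faulty. *)
Lemma bad_regions_witness (F : {set V' V f.+1}) : ~~ good_regions F ->
  exists2 j : {set V} * {ffun 'I_f.+1 -> V},
    (j.1 \in P) && (j.2 \in ffun_on j.1) & copy_choice j.2 \subset F.
Proof.
case/forall_inPn => B BP /existsPn no_clean.
have faulty i : exists w, (w \in B) && ((w, i) \in F).
  by have /forall_inPn [w wB /negPn wF] := no_clean i; exists w; rewrite wB.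
exists (B, [ffun i => xchoose (faulty i)]) => /=.
  apply/andP; split => //.
  by apply/ffun_onP => i; rewrite ffunE; case/andP: (xchooseP (faulty i)).
apply/fintype.subsetP => _ /imsetP [i _ ->]; rewrite ffunE.
by case/andP: (xchooseP (faulty i)).
Qed.

(* There are |B|^(f+1) maps [f+1] -> B, each choosing f+1 copies. *)
Lemma sum_copy_choices (R : realType) (p : R) :
  \sum_(j : {set V} * {ffun 'I_f.+1 -> V} | (j.1 \in P) && (j.2 \in ffun_on j.1))
     p ^+ #|copy_choice j.2|
    = \sum_(B in P) (#|B|%:R * p) ^+ f.+1.
Proof.
rewrite -(pair_big_dep (mem P) (fun B => mem (ffun_on B))
  (fun _ (g : {ffun 'I_f.+1 -> V}) => p ^+ #|copy_choice g|)) /=.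
apply: eq_bigr => B _; under eq_bigr do rewrite card_copy_choice.
by rewrite sumr_const card_ffun_on card_ord exprMn -natrX mulr_natl.
Qed.

Lemma valid_simulation_prob (R : realType) (E : rel V) (S I M : Type)
    (A : algorithm V S I M) (inp : nat -> V -> I) (p : R) :
  finset.partition P [set: V] -> 0 <= p <= 1 -> (0 < #|V|)%N ->
  1 - valid_ratio P f p ^+ f.+1 <= prob_Om p (fun F : {set V' V f.+1} =>
    forall om, admissible F om -> simulates E P A inp om).
Proof.
move=> HP p01 V_gt0.
apply: le_trans (prob_mono p01 (ev1 := fun F => good_regions F) _) => [|F good om];
  last exact: good_regions_simulate.
rewrite prob_compl lerB //.
apply: le_trans (sum_regions_bound f HP (andP p01).1 V_gt0).
rewrite -sum_copy_choices; apply: le_trans (union_bound _ _ p01).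
by apply: (prob_mono p01) => F /negP; exact: bad_regions_witness.
Qed.

End ValidCase.

Definition active_nodes (V : finType) (E : rel V) : {set V} :=
  [set v | [exists w, E v w]].

Lemma invalid_simulation_prob (R : realType) (V : finType) (E : rel V)
    (P : {set {set V}}) (S I M : Type) (A : algorithm V S I M)
    (inp : nat -> V -> I) (f : nat) (p : R) :
  0 <= p <= 1 -> 0 < #|active_nodes E|%:R * p ^+ f.+1 ->
  1 - (#|active_nodes E|%:R * p ^+ f.+1)^-1 <=
    prob_Om p (fun F : {set V' V f.+1} => ~ simulates E P A inp (omit_all F)).
Proof.
move=> p01; set D := active_nodes E.
have -> : #|D|%:R * p ^+ f.+1 = mean_hits p (mem D) (copies f.+1).
  rewrite /mean_hits (eq_bigr _ (fun v _ => congr1 _ (card_copies _ v))).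
  by rewrite sumr_const mulr_natl.
move=> mu_gt0; apply: le_trans (second_moment p01 _ mu_gt0) _ => [u v _ _|].
  exact: copies_disjoint.
apply: (prob_mono p01) => F [v]; rewrite /= finset.inE => /existsP [w Evw] all_faulty.
apply: faulty_inneighbour_blocks Evw _ => i.
by apply: (fintype.subsetP all_faulty); apply/imsetP; exists i.
Qed.

Local Open Scope classical_set_scope.
Local Open Scope ring_scope.

Lemma eventually_from (Q : nat -> Prop) :
  (exists m0, forall m, (m0 <= m)%N -> Q m) -> \forall m \near \oo, Q m.
Proof. by move=> [m0 Q_m0]; exists m0. Qed.

Lemma cvg_to_one (R : realType) (q a : nat -> R) :
  (forall m, q m <= 1) -> (\forall m \near \oo, 1 - a m <= q m) ->
  a @ \oo --> (0 : R) -> q @ \oo --> (1 : R).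
Proof.
move=> q_le1 q_ge a_to0.
apply: (squeeze_cvgr (f := fun m => 1 - a m) (h := fun=> 1)).
- by apply: filterS q_ge => m ->; rewrite q_le1.
- by rewrite -[X in _ --> X]subr0; apply: cvgB => //; exact: cvg_cst.
- exact: cvg_cst.
Qed.

(* The quantity p / n^(-1/(f+1)) that must diverge in part (ii). *)
Definition invalid_ratio (R : realType) (V : finType) (f : nat) (p : R) : R :=
  p / (#|V|%:R `^ (- (f.+1%:R)^-1)).

(* invalid_ratio ^ (f+1) = n p^(f+1) is the expected number of nodes all of
   whose copies are faulty. *)
Lemma invalid_ratio_pow (R : realType) (V : finType) (f : nat) (p : R) :
  (0 < #|V|)%N -> invalid_ratio V f p ^+ f.+1 = #|V|%:R * p ^+ f.+1.
Proof.
by move=> V_gt0; rewrite exprMn exprVn powR_root_inv ?ltr0n // invrK mulrC.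
Qed.

Lemma expected_silent_cvgy (R : realType) (V : nat -> finType)
    (E : forall m, rel (V m)) (f : nat) (p : nat -> R) (c : R) :
  0 < c -> (forall m, 0 <= p m) ->
  (\forall m \near \oo, c * #|V m|%:R <= #|active_nodes (E m)|%:R) ->
  (\forall m \near \oo, (0 < #|V m|)%N) ->
  (fun m => invalid_ratio (V m) f (p m)) @ \oo --> +oo ->
  (fun m => #|active_nodes (E m)|%:R * p m ^+ f.+1) @ \oo --> +oo.
Proof.
move=> c_gt0 p_ge0 dense V_gt0 ratio_toy.
have c_ratio_toy : (fun m => c * invalid_ratio (V m) f (p m)) @ \oo --> +oo.
  exact: (gt0_cvgMry (F := (fun m => invalid_ratio (V m) f (p m)) @ \oo) (f := id)
    c_gt0 ratio_toy).
apply: ger_cvgy c_ratio_toy; near=> m.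
have ratio_ge1 : 1 <= invalid_ratio (V m) f (p m).
  by near: m; move/cvgryPge: ratio_toy; apply.
apply: (le_trans (ler_wpM2l (ltW c_gt0) (ler_eXnr (ltn0Sn f) ratio_ge1))).
rewrite invalid_ratio_pow; last by near: m.
rewrite mulrA ler_wpM2r ?exprn_ge0 //; by near: m.
Unshelve. all: by end_near.
Qed.

(* (i) follows from [valid_simulation_prob] since valid_ratio -> 0; (ii) holds
   for the trivial algorithm with all faulty nodes silent, by
   [invalid_simulation_prob] and [expected_silent_cvgy]. *)
Theorem theorem3 (f : nat) (R : realType)
  (V : nat -> finType) (E : forall m, rel (V m)) (P : forall m, {set {set V m}})
  (HP : forall m, finset.partition (P m) [set: V m])
  (p : nat -> R) (Hp : forall m, 0 <= p m <= 1)
  (Hn : forall N : nat, exists m0 : nat, forall m, (m0 <= m)%N -> (N <= #|V m|)%N) :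
  (* (i) *)
  ((fun m => p m /
      (((#|V m|%:R / (min_region (P m))%:R) `^ (- (f.+1%:R)^-1))
        / (max_region (P m))%:R)) @ \oo --> (0 : R) ->
   forall (S I M : nat -> Type)
          (A : forall m, algorithm (V m) (S m) (I m) (M m))
          (inp : forall m, nat -> V m -> I m),
   (fun m => prob_Om (p m)
      (fun F : {set V' (V m) f.+1} =>
         forall om, admissible F om ->
           simulates (E m) (P m) (A m) (inp m) om)) @ \oo --> (1 : R))
  /\
  (* (ii) *)
  ((exists c : R, 0 < c /\ exists m0 : nat, forall m, (m0 <= m)%N ->
       c * #|V m|%:R <= #|finset.finset (fun v : V m => [exists w, E m v w])|%:R) ->
   (exists C : nat, exists m0 : nat, forall m, (m0 <= m)%N ->
       (max_region (P m) <= C)%N) ->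
   (fun m => p m / (#|V m|%:R `^ (- (f.+1%:R)^-1))) @ \oo --> +oo ->
   exists (S I M : nat -> Type)
          (A : forall m, algorithm (V m) (S m) (I m) (M m))
          (inp : forall m, nat -> V m -> I m)
          (beh : forall m, {set V' (V m) f.+1} -> nat -> V' (V m) f.+1 -> V' (V m) f.+1 -> bool),
     (forall m F, admissible F (beh m F)) /\
     (fun m => prob_Om (p m)
        (fun F : {set V' (V m) f.+1} =>
           ~ simulates (E m) (P m) (A m) (inp m) (beh m F))) @ \oo --> (1 : R)).
Proof.
have V_gt0 : \forall m \near \oo, (0 < #|V m|)%N by apply: eventually_from; exact: Hn.
split.
- move=> ratio_to0 S I M A inp.
  apply: (cvg_to_one (a := fun m => valid_ratio (P m) f (p m) ^+ f.+1)).
  + by move=> m; exact: prob_le1.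
  + by apply: filterS V_gt0 => m; exact: valid_simulation_prob.
  + rewrite -[X in _ --> X](@expr0n R f.+1).
    exact: (continuous_cvg _ (@exprn_continuous R f.+1 0) ratio_to0).
- move=> [c [c_gt0 dense]] _ ratio_toy.
  pose trivial m : algorithm (V m) unit unit unit :=
    Algorithm (fun=> tt) (fun _ _ _ _ => None) (fun _ _ _ _ => tt).
  exists (fun=> unit), (fun=> unit), (fun=> unit), trivial, (fun _ _ _ => tt).
  exists (fun m F => omit_all F); split => [m F|]; first exact: omit_all_admissible.
  have mu_toy := expected_silent_cvgy c_gt0 (fun m => (andP (Hp m)).1)
    (eventually_from dense) V_gt0 ratio_toy.
  apply: (cvg_to_one (a := fun m => (#|active_nodes (E m)|%:R * p m ^+ f.+1)^-1)).
  + by move=> m; exact: prob_le1.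
  + by apply: filterS (cvgry_gt mu_toy 0) => m; exact: invalid_simulation_prob.
  + by apply/(gtr0_cvgV0 (cvgry_gt mu_toy 0)).
Qed.
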